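(* Consider the variety of nonempty sets (i.e. left $S$-acts over the trivial monoid $S=\{1\}$). Two nonempty sets $G_1,G_2$ are geometrically equivalent if and only if either $|G_1|=|G_2|=1$, or both $|G_1|\ge 2$ and $|G_2|\ge 2$. Thus there are exactly two geometric equivalence classes: the singletons, and all sets with more than one element.
   Context: For nonempty sets, the free object on a nonempty finite set $X$ is $X$ itself, homomorphisms are arbitrary maps, and congruences are equivalence relations. For a set $G$ and a binary relation $T\subseteq X\times X$, let $T'_G=\{\mu:X\to G : T\subseteq\ker\mu\}$, where $\ker\mu=\{(x,y):\mu(x)=\mu(y)\}$, and $T''_G=\bigcap_{\mu\in T'_G}\ker\mu$ (empty intersection $=X\times X$). Sets $G_1,G_2$ are geometrically equivalent iff $T''_{G_1}=T''_{G_2}$ for every nonempty finite set $X$ and every relation $T\subseteq X\times X$. *)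

From mathcomp Require Import all_boot.
Set Implicit Arguments. Unset Strict Implicit. Unset Printing Implicit Defensive.

Definition kerm (X G : Type) (mu : X -> G) : X -> X -> Prop :=
  fun x y => mu x = mu y.

Definition Tprime (G : Type) (X : Type) (T : X -> X -> Prop) (mu : X -> G) : Prop :=
  forall x y, T x y -> kerm mu x y.

(* T''_G : intersection of ker mu over mu in T'_G (empty intersection = X x X) *)
Definition Tclosure (G : Type) (X : Type) (T : X -> X -> Prop) : X -> X -> Prop :=
  fun x y => forall mu : X -> G, Tprime T mu -> kerm mu x y.

Definition geom_equiv (G1 G2 : Type) : Prop :=
  forall (X : finType), 0 < #|X| ->
  forall T : X -> X -> Prop,
    forall x y : X, Tclosure G1 T x y <-> Tclosure G2 T x y.

Definition at_most_one (G : Type) : Prop := forall a b : G, a = b.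
Definition at_least_two (G : Type) : Prop := exists a b : G, a <> b.

From mathcomp Require Import all_boot.
From Stdlib Require Import Classical ClassicalEpsilon.

Set Implicit Arguments.
Unset Strict Implicit.

(* A one-point set separates nothing, so its closure is always X x X.  A set G
   with two points a <> b has the same closure operator as bool: bool embeds
   into G, and conversely every map mu : X -> G is refined by the two-valued
   map "mu z = mu x".  Finally X = bool with T empty separates the two
   classes, since there T''_G x y holds for all x y iff |G| <= 1. *)

Lemma Tclosure_at_most_one (G X : Type) (T : X -> X -> Prop) (x y : X) :
  at_most_one G -> Tclosure G T x y.
Proof. by move=> G_one mu _; apply: G_one. Qed.

Lemma Tclosure_inj (G H X : Type) (f : H -> G) (T : X -> X -> Prop) (x y : X) :
  injective f -> Tclosure G T x y -> Tclosure H T x y.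
Proof.
move=> f_inj Gxy mu Tmu; apply: f_inj; apply: (Gxy (f \o mu)).
by move=> u v /Tmu; rewrite /kerm /= => ->.
Qed.

Lemma Tclosure_bool_sub (G X : Type) (T : X -> X -> Prop) (x y : X) :
  Tclosure bool T x y -> Tclosure G T x y.
Proof.
move=> Bxy mu Tmu.
pose nu z : bool := if excluded_middle_informative (mu z = mu x) then true else false.
have Tnu : Tprime T nu.
  by move=> u v /Tmu; rewrite /kerm /nu => ->.
have := Bxy nu Tnu; rewrite /kerm /nu.
by do 2 destruct excluded_middle_informative.
Qed.

Lemma at_least_two_inj_bool (G : Type) :
  at_least_two G -> exists f : bool -> G, injective f.
Proof.
move=> [a [b ab]]; exists (fun c => if c then a else b).
by case=> [] [] // /esym.
Qed.

Lemma Tclosure_at_least_two (G X : Type) (T : X -> X -> Prop) (x y : X) :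
  at_least_two G -> (Tclosure G T x y <-> Tclosure bool T x y).
Proof.
move=> /at_least_two_inj_bool [f f_inj]; split; last exact: Tclosure_bool_sub.
exact: Tclosure_inj f_inj.
Qed.

Lemma at_most_one_or_at_least_two (G : Type) : at_most_one G \/ at_least_two G.
Proof.
have [two|not_two] := classic (at_least_two G); [by right | left].
by move=> a b; apply: NNPP => ab; apply: not_two; exists a, b.
Qed.

Lemma Tclosure_empty_at_least_two (G : Type) :
  at_least_two G -> ~ Tclosure G (fun _ _ : bool => False) true false.
Proof.
move=> /at_least_two_inj_bool [f f_inj] Gtf.
by have /f_inj := Gtf f (fun _ _ => False_ind _).
Qed.

Lemma geom_equiv_sym (G1 G2 : Type) : geom_equiv G1 G2 -> geom_equiv G2 G1.
Proof. by move=> E X X0 T x y; rewrite E. Qed.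

Lemma not_geom_equiv_one_two (G1 G2 : Type) :
  at_most_one G1 -> at_least_two G2 -> ~ geom_equiv G1 G2.
Proof.
move=> G1_one G2_two E; apply: (Tclosure_empty_at_least_two G2_two).
have bool_gt0 : 0 < #|{: bool}| by rewrite card_bool.
apply/(E bool bool_gt0).
exact: Tclosure_at_most_one.
Qed.

Theorem theorem3p2 (G1 G2 : Type) (ne1 : inhabited G1) (ne2 : inhabited G2) :
  geom_equiv G1 G2 <->
  ((at_most_one G1 /\ at_most_one G2) \/ (at_least_two G1 /\ at_least_two G2)).
Proof.
split=> [E|[[G1_one G2_one]|[G1_two G2_two]] X _ T x y].
- have [G1_one|G1_two] := at_most_one_or_at_least_two G1;
  have [G2_one|G2_two] := at_most_one_or_at_least_two G2; [by left | | | by right].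
  + by case: (not_geom_equiv_one_two G1_one G2_two).
  + by case: (not_geom_equiv_one_two G2_one G1_two (geom_equiv_sym E)).
- by split=> _; apply: Tclosure_at_most_one.
- by rewrite Tclosure_at_least_two // Tclosure_at_least_two.
Qed.
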